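(* Let $I=\{1,\dots,\ell\}$, $J=\{\ell+1,\dots,p\}$, let $h_1,\dots,h_p\colon\mathbb R^n\times\mathbb R^m\to\overline{\mathbb R}$ and $\Gamma(x):=\{y\in\mathbb R^m\mid h_i(x,y)\le0\ (i\in I),\ h_i(x,y)=0\ (i\in J)\}$. Fix $\bar x\in\operatorname{dom}\Gamma$ and $\bar y\in\Gamma(\bar x)$. Assume that $h_1,\dots,h_p$ are continuous and continuously differentiable with respect to $y$ in a neighborhood of $\{\bar x\}\times\Gamma(\bar x)$, that $h_i(x,\cdot)\colon\mathbb R^m\to\mathbb R$ is continuous for every $x\in\operatorname{dom}\Gamma$ and every $i$, and assume (A1): for each $x\in\mathbb R^n$, $h_i(x,\cdot)$ is convex for $i\in I$ and affine for $i\in J$; and (A2): $\Gamma$ is locally bounded at $\bar x$. Then the following are equivalent: (a) $\Gamma$ is R-regular at $(\bar x,\bar y)$ with respect to $\operatorname{dom}\Gamma$; (b) there is a constant $M>0$ such that for all sequences $\{x^k\}\subset\operatorname{dom}\Gamma$, $\{\nu^k\}\subset\mathbb R^m$, $\{y^k\}\subset\mathbb R^m$ with $x^k\to\bar x$, $\nu^k\to\bar y$, $\nu^k\notin\Gamma(x^k)$ and $y^k\in\Pi(\nu^k,\Gamma(x^k))$ for all $k$, the set $\Lambda^M_{\nu^k}(x^k,y^k)$ is nonempty for all sufficiently large $k$.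
   Context: $\operatorname{dom}\Gamma:=\{x\mid\Gamma(x)\ne\emptyset\}$; $\|\cdot\|$ Euclidean norm; $\operatorname{dist}(\nu,A):=\inf_{z\in A}\|z-\nu\|$; $\Pi(\nu,A):=\operatorname{argmin}\{\|z-\nu\|\mid z\in A\}$. $\Gamma$ is locally bounded at $\bar x$ if there are a bounded set $B$ and a neighborhood $V$ of $\bar x$ with $\Gamma(x)\subset B$ for all $x\in V$. $\Gamma$ is R-regular at $(\bar x,\bar y)$ with respect to $\Omega$ if there exist $\kappa>0$ and a neighborhood $U$ of $(\bar x,\bar y)$ such that $\operatorname{dist}(y,\Gamma(x))\le\kappa\max\{0,\max_{i\in I}h_i(x,y),\max_{i\in J}|h_i(x,y)|\}$ for all $(x,y)\in U\cap(\Omega\times\mathbb R^m)$. For $x\in\operatorname{dom}\Gamma$, $\nu\notin\Gamma(x)$, $y\in\Pi(\nu,\Gamma(x))$, $M>0$: $\Lambda_\nu(x,y):=\{\lambda\in\mathbb R^p\mid \frac{y-\nu}{\|y-\nu\|}+\sum_{i=1}^p\lambda_i\nabla_yh_i(x,y)=0,\ \lambda_i\ge0,\ \lambda_ih_i(x,y)=0\ \forall i\in I\}$ and $\Lambda^M_\nu(x,y):=\{\lambda\in\Lambda_\nu(x,y)\mid\sum_{i=1}^p|\lambda_i|\le M\}$. *)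

From HB Require Import structures.
From mathcomp Require Import all_boot all_order all_algebra.
From mathcomp Require Import all_classical all_reals all_analysis.
Set Implicit Arguments. Unset Strict Implicit. Unset Printing Implicit Defensive.
Import Order.TTheory GRing.Theory Num.Theory.
Import numFieldNormedType.Exports.
Local Open Scope classical_set_scope.
Local Open Scope ring_scope.

Section Defs.
Variable R : realType.

Definition enorm (k : nat) (v : 'rV[R]_k) : R :=
  Num.sqrt (\sum_(j < k) v 0 j ^+ 2).

Definition edot (k : nat) (u v : 'rV[R]_k) : R := \sum_(j < k) u 0 j * v 0 j.

Definition edist (k : nat) (v : 'rV[R]_k) (A : set 'rV[R]_k) : R :=
  inf [set enorm (z - v) | z in A].

Definition eproj (k : nat) (v : 'rV[R]_k) (A : set 'rV[R]_k) : set 'rV[R]_k :=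
  [set y | A y /\ forall z, A z -> enorm (y - v) <= enorm (z - v)].

Variables (n m p l : nat).
(* indices: I = {i < l} (the paper's 1..l), J = {l <= i < p} (the paper's l+1..p) *)
Variable h : 'I_p -> 'rV[R]_n -> 'rV[R]_m -> \bar R.

Definition Gamma (x : 'rV[R]_n) : set 'rV[R]_m :=
  [set y | (forall i : 'I_p, (i < l)%N -> (h i x y <= 0)%E) /\
           (forall i : 'I_p, (l <= i)%N -> h i x y = 0%E)].

Definition domG : set 'rV[R]_n := [set x | Gamma x !=set0].

Definition grad_y (i : 'I_p) (x : 'rV[R]_n) (y : 'rV[R]_m) : 'rV[R]_m :=
  \row_(j < m) ('d (fun y' => fine (h i x y')) y) (delta_mx 0 j).

Definition Lambda (nu : 'rV[R]_m) (x : 'rV[R]_n) (y : 'rV[R]_m) : set 'rV[R]_p :=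
  [set lam | (enorm (y - nu))^-1 *: (y - nu)
                + \sum_(i < p) lam 0 i *: grad_y i x y = 0 /\
             (forall i : 'I_p, (i < l)%N -> 0 <= lam 0 i /\ ((lam 0 i)%:E * h i x y = 0)%E)].

Definition LambdaM (M : R) (nu : 'rV[R]_m) (x : 'rV[R]_n) (y : 'rV[R]_m) : set 'rV[R]_p :=
  [set lam | Lambda nu x y lam /\ \sum_(i < p) `|lam 0 i| <= M].

Definition resid (x : 'rV[R]_n) (y : 'rV[R]_m) : \bar R :=
  \big[maxe/0%E]_(i < p) (if (i < l)%N then h i x y else `|h i x y|)%E.

Definition Rregular (Omega : set 'rV[R]_n) (xb : 'rV[R]_n) (yb : 'rV[R]_m) : Prop :=
  exists kappa : R, 0 < kappa /\
  exists U : set ('rV[R]_n * 'rV[R]_m), nbhs (xb, yb) U /\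
  forall x y, U (x, y) -> Omega x ->
    ((edist y (Gamma x))%:E <= kappa%:E * resid x y)%E.

Definition loc_bounded (xb : 'rV[R]_n) : Prop :=
  exists B : set 'rV[R]_m, (exists r : R, forall y, B y -> enorm y <= r) /\
  exists V : set 'rV[R]_n, nbhs xb V /\ forall x, V x -> Gamma x `<=` B.

End Defs.

(* convexity of an extended-real-valued function (convex epigraph) *)
Definition econvex (R : realType) (k : nat) (f : 'rV[R]_k -> \bar R) : Prop :=
  forall (y z : 'rV[R]_k) (a b t : R), 0 <= t <= 1 ->
    (f y <= a%:E)%E -> (f z <= b%:E)%E ->
    (f (t *: y + (1 - t) *: z)%R <= (t * a + (1 - t) * b)%R%:E)%E.

Definition eaffine (R : realType) (k : nat) (f : 'rV[R]_k -> \bar R) : Prop :=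
  exists (a : 'rV[R]_k) (b : R), forall y, f y = (edot a y + b)%:E.

From Pilot Require Import Defs.
From HB Require Import structures.
From mathcomp Require Import all_boot all_order all_algebra.
From mathcomp Require Import all_classical all_reals all_analysis.
From mathcomp Require Import ring lra.
Import Order.TTheory GRing.Theory Num.Theory.
Import numFieldNormedType.Exports.
Local Open Scope classical_set_scope.
Local Open Scope ring_scope.
Set Implicit Arguments. Unset Strict Implicit. Unset Printing Implicit Defensive.

(* (b) => (a): pairing the stationarity equation of a multiplier lam with nu - y, where
   y is the projection of nu onto Gamma(x), and using the gradient inequality of the
   convex h_i and the exact first-order expansion of the affine ones, gives
   dist(nu, Gamma(x)) = |y - nu| <= (sum_i |lam_i|) * resid(x, nu).  A sequence violating
   the error bound with constant M therefore admits no multiplier of l1-norm <= M.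

   (a) => (b): near (xb, yb) the projections y^k are close to yb, so the error bound with
   constant kappa holds on a ball around y^k.  Let u = (nu - y) / |nu - y| and let c be
   the point closest to u in the compact convex set of combinations sum_i lam_i grad h_i(y)
   with admissible signs and sum_i |lam_i| <= kappa.  If d = u - c were nonzero, then along
   y + t d the distance to Gamma(x) would grow at rate <u, d> = |d|^2 + <d, c>, while the
   optimality of c bounds the growth rate of the residual by <d, c> / kappa, contradicting
   the error bound.  Hence u = c, which is the multiplier rule with lam in Lambda^kappa. *)

(* Plain [edist] would be the extended distance of mathcomp-analysis. *)
Local Notation edist := Defs.edist.

Section Euclid.
Variables (R : realType) (k : nat).
Implicit Types (u v w : 'rV[R]_k).

Lemma edotC u v : edot u v = edot v u.
Proof. by apply: eq_bigr => j _; rewrite mulrC. Qed.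

Lemma edotDr u v w : edot u (v + w) = edot u v + edot u w.
Proof. by rewrite /edot -big_split; apply: eq_bigr => j _; rewrite mxE mulrDr. Qed.

Lemma edotZr u v a : edot u (a *: v) = a * edot u v.
Proof. by rewrite /edot mulr_sumr; apply: eq_bigr => j _; rewrite mxE mulrCA. Qed.

Lemma edot0r u : edot u 0 = 0.
Proof. by rewrite -(scale0r 0) edotZr mul0r. Qed.

Lemma edotNr u v : edot u (- v) = - edot u v.
Proof. by rewrite -scaleN1r edotZr mulN1r. Qed.

Lemma edotBr u v w : edot u (v - w) = edot u v - edot u w.
Proof. by rewrite edotDr edotNr. Qed.

Lemma edotDl u v w : edot (v + w) u = edot v u + edot w u.
Proof. by rewrite edotC edotDr !(edotC u). Qed.

Lemma edotZl u v a : edot (a *: v) u = a * edot v u.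
Proof. by rewrite edotC edotZr edotC. Qed.

Lemma edotNl u v : edot (- v) u = - edot v u.
Proof. by rewrite edotC edotNr edotC. Qed.

Lemma edotBl u v w : edot (v - w) u = edot v u - edot w u.
Proof. by rewrite edotDl edotNl. Qed.

Lemma edot0l u : edot 0 u = 0.
Proof. by rewrite edotC edot0r. Qed.

Lemma edot_suml (I : Type) (r : seq I) (P : pred I) u (F : I -> 'rV[R]_k) :
  edot (\sum_(i <- r | P i) F i) u = \sum_(i <- r | P i) edot (F i) u.
Proof. exact: (big_morph _ (edotDl u) (edot0l u)). Qed.

Lemma edot_ge0 v : 0 <= edot v v.
Proof. by apply: sumr_ge0 => j _; rewrite -expr2 sqr_ge0. Qed.

Lemma edot_eq0 v : (edot v v == 0) = (v == 0).
Proof.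
apply/idP/eqP => [|->]; last by rewrite edot0r.
rewrite psumr_eq0 => [/allP v0|j _]; last by rewrite -expr2 sqr_ge0.
apply/rowP => j; rewrite mxE; apply/eqP.
by have := v0 j (mem_index_enum j); rewrite /= mulf_eq0 orbb.
Qed.

Lemma sqr_enorm v : enorm v ^+ 2 = edot v v.
Proof.
rewrite /enorm sqr_sqrtr; last by apply: sumr_ge0 => j _; rewrite sqr_ge0.
by apply: eq_bigr => j _; rewrite expr2.
Qed.

Lemma enorm_ge0 v : 0 <= enorm v.
Proof. exact: sqrtr_ge0. Qed.

Lemma enormE v : enorm v = Num.sqrt (edot v v).
Proof. by rewrite -sqr_enorm sqrtr_sqr ger0_norm // enorm_ge0. Qed.

Lemma enorm_eq0 v : (enorm v == 0) = (v == 0).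
Proof. by rewrite enormE sqrtr_eq0 le_eqVlt ltNge edot_ge0 orbF edot_eq0. Qed.

Lemma enorm_gt0 v : (0 < enorm v) = (v != 0).
Proof. by rewrite lt0r enorm_ge0 andbT enorm_eq0. Qed.

Lemma enormZ v a : enorm (a *: v) = `|a| * enorm v.
Proof. by rewrite !enormE edotZl edotZr mulrA -expr2 sqrtrM ?sqr_ge0 // sqrtr_sqr. Qed.

Lemma enormN v : enorm (- v) = enorm v.
Proof. by rewrite -scaleN1r enormZ normrN1 mul1r. Qed.

Lemma enormBC u v : enorm (u - v) = enorm (v - u).
Proof. by rewrite -enormN opprB. Qed.

Lemma ler_enorm u v : (enorm u <= enorm v) = (edot u u <= edot v v).
Proof. by rewrite !enormE ler_sqrt // edot_ge0. Qed.

Lemma edot_unit_le_enorm u v : enorm u = 1 -> edot u v <= enorm v.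
Proof.
move=> u1; set c := edot u v.
have : 0 <= edot (v - c *: u) (v - c *: u) := edot_ge0 _.
rewrite edotBl !edotBr !edotZl !edotZr -!sqr_enorm u1 (edotC v u) -/c expr1n.
have := enorm_ge0 v; nra.
Qed.

Lemma mx_norm_le_enorm v : `|v| <= enorm v.
Proof.
rewrite [`|v|]mx_normrE; apply: bigmax_le => [|[i j] _] /=; first exact: enorm_ge0.
rewrite (ord1 i) -(sqrtr_sqr (v 0 j)) /enorm ler_wsqrtr //.
by rewrite (bigD1 j) //= lerDl sumr_ge0 // => j' _; rewrite sqr_ge0.
Qed.

Lemma continuous_edot (T : topologicalType) (f g : T -> 'rV[R]_k) :
  continuous f -> continuous g -> continuous (fun t => edot (f t) (g t)).
Proof.
move=> cf cg; apply: continuous_big => [z|j _ t]; first exact: add_continuous.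
have coord (F : T -> 'rV[R]_k) : continuous F -> continuous (fun s => F s 0 j).
  by move=> cF s; exact: (continuous_comp (cF s) (@coord_continuous R 1 k 0 j (F s))).
by apply: cvgM; [exact: coord | exact: coord].
Qed.

End Euclid.

Section Projection.
Variables (R : realType) (k : nat).
Implicit Types (S : set 'rV[R]_k) (u v w y z : 'rV[R]_k).

Definition convex_rV S :=
  forall a b (t : R), 0 <= t <= 1 -> S a -> S b -> S (t *: a + (1 - t) *: b).

Lemma edist_le_enorm S v w : S w -> edist v S <= enorm (w - v).
Proof.
move=> Sw; apply: ge_inf; last by exists w.
by exists 0 => _ [z _ <-]; exact: enorm_ge0.
Qed.

Lemma edist_ge S v c :
  S !=set0 -> (forall w, S w -> c <= enorm (w - v)) -> c <= edist v S.
Proof.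
move=> [w Sw] cS; apply: lb_le_inf; first by exists (enorm (w - v)), w.
by move=> _ [z Sz <-]; exact: cS.
Qed.

Lemma edist_eproj S v y : eproj v S y -> edist v S = enorm (y - v).
Proof.
move=> [Sy ymin]; apply/eqP; rewrite eq_le edist_le_enorm //=.
by apply: edist_ge; [exists y | exact: ymin].
Qed.

Lemma eproj_exists S v : closed S -> S !=set0 -> exists y, eproj v S y.
Proof.
move=> clS [y0 Sy0]; pose g w := edot (w - v) (w - v).
have cg : continuous g.
  by apply: continuous_edot => w; apply: continuousB => //; exact: cst_continuous.
pose K := S `&` [set w | g w <= g y0].
have clK : closed K.
  apply: closedI => //; rewrite -[X in closed X]/(g @^-1` [set r | r <= g y0]).
  by apply: (continuous_closedP g).1 cg _ _; exact: closed_le.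
have bK : [bounded w | w in K].
  rewrite /bounded_near; near=> M => w [_ Kw] /=; rewrite -[w](subrK v).
  apply: le_trans (ler_normD _ _) _; apply: (@le_trans _ _ (Num.sqrt (g y0) + `|v|)).
    by rewrite lerD2r (le_trans (mx_norm_le_enorm _)) // enormE ler_wsqrtr.
  by near: M; apply: nbhs_pinfty_ge; exact: num_real.
have [y Ky ymin] := compact_EVT_min (ex_intro _ y0 (conj Sy0 (lexx _)))
  (bounded_closed_compact bK clK) (continuous_subspaceT cg).
move: Ky; rewrite inE => -[Sy gy]; exists y; split => // z Sz.
rewrite ler_enorm; have [gz|/ltW gz] := leP (g z) (g y0); last exact: le_trans gz.
by apply: ymin; rewrite inE.
Unshelve. all: by end_near.
Qed.

Lemma ge0_of_ray (a b : R) : (forall s, 0 < s <= 1 -> 0 <= a + s * b) -> 0 <= a.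
Proof.
move=> ray; rewrite leNgt; apply/negP => a0.
pose s := - a / (2 * (`|b| - a)).
have den0 : 0 < 2 * (`|b| - a) by have := normr_ge0 b; lra.
have sden : s * (2 * (`|b| - a)) = - a by rewrite mulfVK // gt_eqF.
have s0 : 0 < s by rewrite divr_gt0 // oppr_gt0.
have s1 : s <= 1 by rewrite ler_pdivrMr // mul1r; have := normr_ge0 b; lra.
have /ray : 0 < s <= 1 by rewrite s0 s1.
have := ler_norm b; have := normr_ge0 b; nra.
Qed.

Lemma eproj_normal S v y :
  convex_rV S -> eproj v S y -> forall w, S w -> edot (v - y) (w - y) <= 0.
Proof.
move=> cS [Sy ymin] w Sw; rewrite -opprB edotNl oppr_le0 -(pmulr_rge0 _ (ltr0n _ 2)).
apply: (ge0_of_ray (b := edot (w - y) (w - y))) => s /andP[s0 s1].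
have s01 : 0 <= s <= 1 by rewrite (ltW s0) s1.
rewrite -(pmulr_rge0 _ s0); have := ymin _ (cS w y s s01 Sw Sy); rewrite ler_enorm.
have -> : s *: w + (1 - s) *: y - v = (y - v) + s *: (w - y).
  by apply/rowP => j; rewrite !mxE; ring.
move: (y - v) (w - y) => a b.
rewrite edotDl !edotDr !edotZl !edotZr (edotC b).
have := edot_ge0 b; nra.
Qed.

Lemma edist_ge_halfspace S u y z : S y -> enorm u = 1 ->
  (forall w, S w -> edot u (w - y) <= 0) -> edot u (z - y) <= edist z S.
Proof.
move=> Sy u1 uS; apply: edist_ge; first by exists y.
move=> w Sw; rewrite enormBC; apply: le_trans (edot_unit_le_enorm _ u1).
have -> : z - w = (z - y) + (y - w) by rewrite addrA subrK.
by rewrite (edotDr u (z - y)) lerDl -opprB edotNr oppr_ge0 uS.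
Qed.

End Projection.

Section Differential.
Variables (R : realType) (k : nat).
Implicit Types (f : 'rV[R]_k -> R) (y w z : 'rV[R]_k).

Definition convex_fun_rV f :=
  forall a b (t : R), 0 <= t <= 1 -> f (t *: a + (1 - t) *: b) <= t * f a + (1 - t) * f b.

Lemma diff_nondifferentiable f y w : ~ differentiable f y -> 'd f y w = 0.
Proof.
move=> ndf; rewrite /diff getPN //= => df Pdf; apply: ndf; apply/diffP; rewrite /diff.
match goal with |- context[get ?P] => have ex : exists x, P x by exists df end.
exact: getPex ex.
Qed.

Lemma edot_row_diff f y w : edot (\row_(j < k) 'd f y (delta_mx 0 j)) w = 'd f y w.
Proof.
rewrite {2}(row_sum_delta w) linear_sum; apply: eq_bigr => j _.
by rewrite mxE linearZ /= mulrC.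
Qed.

Lemma diff_ray_quotient_cvg f y w : differentiable f y ->
  (fun t : R => t^-1 * (f (y + t *: w) - f y)) @ 0^'+ --> 'd f y w.
Proof.
move=> df; rewrite -deriveE //; apply: cvg_dnbhs_at_right.
have -> : (fun t : R => t^-1 * (f (y + t *: w) - f y)) =
    (fun t => t^-1 *: ((f \o shift y) (t *: w) - f y)).
  by apply/funext => t /=; rewrite [t *: w + y]addrC.
exact: diff_derivable.
Qed.

Lemma diff_ray_approx f y w e : differentiable f y -> 0 < e ->
  \forall t \near 0^'+, `|f (y + t *: w) - f y - t * 'd f y w| <= t * e.
Proof.
move=> df e0.
have /cvgrPdist_le/(_ e e0) q_near := diff_ray_quotient_cvg (w := w) df.
near=> t; have t0 : 0 < t by near: t; exact: nbhs_right_gt.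
have : `|'d f y w - t^-1 * (f (y + t *: w) - f y)| <= e by near: t.
rewrite -(ler_pM2l t0) -{1}(gtr0_norm t0) -normrM mulrBr mulrA mulfV ?gt_eqF //.
by rewrite mul1r distrC.
Unshelve. all: by end_near.
Qed.

Lemma near0_right_mulr_lt (c b : R) : 0 < b -> \forall t \near 0^'+, t * c < b.
Proof.
move=> b0; have c1 : 0 < `|c| + 1 by rewrite ltr_wpDl.
near=> t; have t0 : 0 < t by near: t; exact: nbhs_right_gt.
have : t < b / (`|c| + 1) by near: t; apply: nbhs_right_lt; rewrite divr_gt0.
rewrite ltr_pdivlMr // => tb; have := ler_norm c; nra.
Unshelve. all: by end_near.
Qed.

Lemma convex_diff_le f y z :
  convex_fun_rV f -> differentiable f y -> 'd f y (z - y) <= f z - f y.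
Proof.
move=> cf df; apply/ler_addgt0Pr => e e0.
have [t [t0 t1 approx]] : exists t : R, [/\ 0 < t, t <= 1 &
    `|f (y + t *: (z - y)) - f y - t * 'd f y (z - y)| <= t * e].
  apply: (filter_ex (F := 0^'+)); near=> t; split.
  - by near: t; exact: nbhs_right_gt.
  - by near: t; apply: nbhs_right_le; exact: ltr01.
  - by near: t; exact: diff_ray_approx.
have : f (y + t *: (z - y)) <= t * f z + (1 - t) * f y.
  have -> : y + t *: (z - y) = t *: z + (1 - t) *: y.
    by apply/rowP => j; rewrite !mxE; ring.
  by apply: cf; rewrite t1 ltW.
move: approx; rewrite ler_norml => /andP[lo _] up.
rewrite -(ler_pM2l t0); nra.
Unshelve. all: by end_near.
Qed.

Lemma affine_diff_eq f (a : 'rV[R]_k) (b : R) y z :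
  (forall x, f x = edot a x + b) -> differentiable f y -> 'd f y (z - y) = f z - f y.
Proof.
move=> fE df; have slope t : f (y + t *: (z - y)) - f y = t * (f z - f y).
  by rewrite !fE edotDr edotZr edotBr; ring.
apply/eqP; rewrite -subr_eq0 -normr_eq0 eq_le normr_ge0 andbT; apply/ler_addgt0Pr.
move=> e e0; rewrite add0r.
have [t [t0 approx]] : exists t : R, 0 < t /\
    `|f (y + t *: (z - y)) - f y - t * 'd f y (z - y)| <= t * e.
  apply: (filter_ex (F := 0^'+)); near=> t; split.
  - by near: t; exact: nbhs_right_gt.
  - by near: t; exact: diff_ray_approx.
move: approx; rewrite slope -mulrBr normrM gtr0_norm // ler_pM2l //.
by rewrite distrC.
Unshelve. all: by end_near.
Qed.

End Differential.

Section Constraints.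
Variables (R : realType) (n m p l : nat).
Variable h : 'I_p -> 'rV[R]_n -> 'rV[R]_m -> \bar R.
Implicit Types (i : 'I_p) (x : 'rV[R]_n) (y z nu : 'rV[R]_m).

Definition hR i x y : R := fine (h i x y).

Definition viol i x y : R := if (i < l)%N then hR i x y else `|hR i x y|.

Definition rresid x y : R := \big[Num.max/0]_(i < p) viol i x y.

Lemma rresid_ge0 x y : 0 <= rresid x y.
Proof. by apply: bigmax_ge_id. Qed.

Lemma viol_le_rresid i x y : viol i x y <= rresid x y.
Proof. exact: le_bigmax. Qed.

Lemma rresid_le x y c : 0 <= c -> (forall i, viol i x y <= c) -> rresid x y <= c.
Proof. by move=> c0 vc; apply: bigmax_le. Qed.

Lemma edot_grad_y i x y w : edot (grad_y h i x y) w = 'd (hR i x) y w.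
Proof. exact: edot_row_diff. Qed.

Section Fiber.
Variable x : 'rV[R]_n.
Hypothesis h_fin : forall i y, h i x y \is a fin_num.

Lemma hRE i y : h i x y = (hR i x y)%:E.
Proof. by rewrite /hR fineK. Qed.

Lemma residE y : resid l h x y = (rresid x y)%:E.
Proof.
rewrite /resid /rresid (big_morph _ (@EFin_max R) (erefl 0%:E)).
by apply: eq_bigr => i _; rewrite /viol hRE; case: ifP.
Qed.

Lemma GammaE y : Gamma l h x y <->
  (forall i, (i < l)%N -> hR i x y <= 0) /\ (forall i, (l <= i)%N -> hR i x y = 0).
Proof.
split=> -[Hle Heq]; split=> i Hi.
- by have := Hle i Hi; rewrite hRE lee_fin.
- by have := Heq i Hi; rewrite hRE => -[].
- by rewrite hRE lee_fin Hle.
- by rewrite hRE Heq.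
Qed.

Lemma Gamma_closed : (forall i, continuous (hR i x)) -> closed (Gamma l h x).
Proof.
move=> hc; have -> : Gamma l h x = \bigcap_(i in [set: 'I_p])
    hR i x @^-1` (if (i < l)%N then [set r | r <= 0] else [set 0]).
  apply/seteqP; split=> y.
    by move=> /GammaE[Hle Heq] i _ /=; case: ltnP => [/Hle|/Heq].
  move=> Hy; apply/GammaE; split=> i Hi; have := Hy i I; rewrite /= ?Hi //.
  by rewrite ltnNge Hi.
apply: closed_bigI => i _; apply: (continuous_closedP _).1 (hc i) _ _.
by case: ifP => _; [exact: closed_le | exact: closed_eq].
Qed.

Hypothesis h_A1 : forall i,
  ((i < l)%N -> econvex (h i x)) /\ ((l <= i)%N -> eaffine (h i x)).

Lemma hR_convex i : (i < l)%N -> convex_fun_rV (hR i x).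
Proof.
move=> il a b t t01; have := (h_A1 i).1 il a b (hR i x a) (hR i x b) t t01.
by rewrite -!hRE => /(_ (lexx _) (lexx _)); rewrite hRE lee_fin.
Qed.

Lemma hR_affine i : (l <= i)%N ->
  exists (a : 'rV[R]_m) (b : R), forall y, hR i x y = edot a y + b.
Proof.
by move=> li; have [a [b ab]] := (h_A1 i).2 li; exists a, b => y; rewrite /hR ab.
Qed.

Lemma Gamma_convex : convex_rV (Gamma l h x).
Proof.
move=> a b t t01 /GammaE[Hale Haeq] /GammaE[Hble Hbeq]; apply/GammaE.
have /andP[t0 t1] := t01; split=> i Hi.
  apply: le_trans (hR_convex Hi a b t01) _.
  by have := Hale i Hi; have := Hble i Hi; nra.
have [c [e ce]] := hR_affine Hi; move: (Haeq i Hi) (Hbeq i Hi).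
by rewrite !ce edotDr !edotZr => ha hb; nra.
Qed.

Lemma mult_slope_le (lam : R) i y nu : Gamma l h x y ->
    ((i < l)%N -> 0 <= lam /\ (lam%:E * h i x y = 0)%E) ->
  lam * 'd (hR i x) y (nu - y) <= `|lam| * rresid x nu.
Proof.
move=> /GammaE[_ Heq] lam_sgn.
have [df|ndf] := pselect (differentiable (hR i x) y); last first.
  by rewrite diff_nondifferentiable // mulr0 mulr_ge0 // rresid_ge0.
have := viol_le_rresid i x nu; rewrite /viol; case: ltnP => [il|li] viol_le.
  have [lam0 compl] := lam_sgn il; rewrite ger0_norm //.
  have [->|lamn0] := eqVneq lam 0; first by rewrite !mul0r.
  have hy0 : hR i x y = 0.
    move: compl; rewrite hRE -EFinM => -[/eqP].
    by rewrite mulf_eq0 (negbTE lamn0) => /eqP.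
  apply: ler_wpM2l => //; apply: le_trans (convex_diff_le _ (hR_convex il) df) _.
  by rewrite hy0 subr0.
have [a [b ab]] := hR_affine li.
rewrite (affine_diff_eq _ ab df) Heq // subr0; apply: le_trans (ler_norm _) _.
by rewrite normrM ler_wpM2l.
Qed.

Lemma enorm_le_mult_rresid (M : R) nu y lam :
    ~ Gamma l h x nu -> eproj nu (Gamma l h x) y -> LambdaM l h M nu x y lam ->
  enorm (y - nu) <= M * rresid x nu.
Proof.
move=> nu_out [Gy _] [[stat lam_sgn] lamM].
have e0 : 0 < enorm (y - nu).
  by rewrite enorm_gt0 subr_eq0; apply: contraPneq nu_out => <-.
have -> : enorm (y - nu) = \sum_(i < p) lam 0 i * 'd (hR i x) y (nu - y).
  have := congr1 (fun v => edot v (nu - y)) stat.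
  rewrite edot0l edotDl edotZl edot_suml.
  rewrite -[nu - y]opprB edotNr -sqr_enorm mulrN expr2 mulKf ?gt_eqF // => /eqP.
  rewrite addrC subr_eq0 => /eqP <-; apply: eq_bigr => i _.
  by rewrite edotZl edot_grad_y opprB.
apply: le_trans (ler_wpM2r (rresid_ge0 _ _) lamM); rewrite mulr_suml.
by apply: ler_sum => i _; apply: mult_slope_le => // /lam_sgn.
Qed.

End Fiber.
End Constraints.

Section Multipliers.
Variables (R : realType) (n m p l : nat).
Variable h : 'I_p -> 'rV[R]_n -> 'rV[R]_m -> \bar R.
Variables (x : 'rV[R]_n) (y : 'rV[R]_m).
Implicit Types (i : 'I_p) (lam : 'rV[R]_p).

Definition admissible_coef i : set R :=
  if (i < l)%N then (if hR h i x y == 0 then [set c | 0 <= c] else [set 0]) else setT.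

Definition admissible_mult (M : R) : set 'rV[R]_p :=
  [set lam | (forall i, admissible_coef i (lam 0 i)) /\ \sum_(i < p) `|lam 0 i| <= M].

Definition mult_comb lam : 'rV[R]_m := \sum_(i < p) lam 0 i *: grad_y h i x y.

Lemma admissible_coef0 i : admissible_coef i 0.
Proof. by rewrite /admissible_coef; case: ifP => // _; case: ifP => //= _. Qed.

Lemma admissible_mult0 M : 0 <= M -> admissible_mult M 0.
Proof.
move=> M0; split=> [i|]; first by rewrite mxE; exact: admissible_coef0.
by rewrite big1 // => i _; rewrite mxE normr0.
Qed.

Lemma admissible_mult_delta M i (c : R) :
  admissible_coef i c -> `|c| <= M -> admissible_mult M (c *: delta_mx 0 i).
Proof.
move=> ci cM; split=> [j|].
  rewrite !mxE eqxx /=; case: eqVneq => [->|_]; rewrite ?mulr1 // mulr0.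
  exact: admissible_coef0.
rewrite (bigD1 i) //= big1 => [|j ji]; first by rewrite !mxE !eqxx mulr1 addr0.
by rewrite !mxE (negbTE ji) mulr0 normr0.
Qed.

Lemma admissible_mult_convex M : convex_rV (admissible_mult M).
Proof.
move=> a b t /andP[t0 t1] [aT aM] [bT bM]; have t1' : 0 <= 1 - t by rewrite subr_ge0.
split=> [i|].
  move: (aT i) (bT i); rewrite /admissible_coef !mxE; case: ifP => // _.
  case: ifP => _ /=; last by move=> -> ->; rewrite !mulr0 addr0.
  by move=> a0 b0; rewrite addr_ge0 ?mulr_ge0.
apply: le_trans (_ : t * M + (1 - t) * M <= M); last by rewrite -mulrDl subrKC mul1r.
apply: le_trans (lerD (ler_wpM2l t0 aM) (ler_wpM2l t1' bM)).
rewrite !mulr_sumr -big_split; apply: ler_sum => i _; rewrite !mxE.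
by apply: le_trans (ler_normD _ _) _; rewrite !normrM (ger0_norm t0) (ger0_norm t1').
Qed.

Lemma admissible_mult_compact M : compact (admissible_mult M).
Proof.
have coord i : continuous (fun lam : 'rV[R]_p => lam 0 i) by exact: coord_continuous.
have l1 : continuous (fun lam : 'rV[R]_p => \sum_(i < p) `|lam 0 i|).
  apply: continuous_big => [z|i _ lam]; first exact: add_continuous.
  exact: continuous_comp (coord i lam) (@norm_continuous _ R^o _).
have bA : [bounded lam | lam in admissible_mult M].
  rewrite /bounded_near; near=> K => lam [_ lamM] /=; apply: le_trans (_ : M <= K).
    rewrite [`|lam|]mx_normrE; apply: bigmax_le => [|[i j] _ /=].
      by apply: le_trans lamM; rewrite sumr_ge0.
    by rewrite (ord1 i); apply: le_trans lamM; rewrite (bigD1 j) //= lerDl sumr_ge0.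
  by near: K; apply: nbhs_pinfty_ge; exact: num_real.
apply: (bounded_closed_compact bA).
have -> : admissible_mult M = \bigcap_(i in [set: 'I_p])
    ((fun lam : 'rV[R]_p => lam 0 i) @^-1` admissible_coef i) `&`
    ((fun lam : 'rV[R]_p => \sum_(i < p) `|lam 0 i|) @^-1` [set r | r <= M]).
  apply/seteqP; split=> lam [lamT lamM]; split=> //.
    by move=> i _; exact: lamT.
  by move=> i; exact: lamT.
apply: closedI; last by apply: (continuous_closedP _).1 l1 _ _; exact: closed_le.
apply: closed_bigI => i _; apply: (continuous_closedP _).1 (coord i) _ _.
rewrite /admissible_coef; case: ifP => _; last exact: closedT.
by case: ifP => _; [exact: closed_ge | exact: closed_eq].
Unshelve. all: by end_near.
Qed.

Lemma mult_comb_conv a b (t : R) :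
  mult_comb (t *: a + (1 - t) *: b) = t *: mult_comb a + (1 - t) *: mult_comb b.
Proof.
apply/rowP => j; rewrite !mxE !summxE !mulr_sumr -big_split.
by apply: eq_bigr => i _ /=; rewrite !mxE; ring.
Qed.

Lemma mult_comb0 : mult_comb 0 = 0.
Proof. by rewrite /mult_comb big1 // => i _; rewrite mxE scale0r. Qed.

Lemma mult_comb_delta (c : R) i : mult_comb (c *: delta_mx 0 i) = c *: grad_y h i x y.
Proof.
rewrite /mult_comb (bigD1 i) //= big1 => [|j ji].
  by rewrite !mxE !eqxx mulr1 addr0.
by rewrite !mxE (negbTE ji) mulr0 scale0r.
Qed.

Lemma continuous_mult_comb : continuous mult_comb.
Proof.
apply: continuous_big => [z|i _ lam]; first exact: add_continuous.
by apply: continuousZr_tmp; exact: coord_continuous.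
Qed.

Lemma mult_comb_image_compact M : compact (mult_comb @` admissible_mult M).
Proof.
apply: (@continuous_compact _ _ mult_comb); last exact: admissible_mult_compact.
by apply: continuous_subspaceT; exact: continuous_mult_comb.
Qed.

Lemma mult_comb_image_convex M : convex_rV (mult_comb @` admissible_mult M).
Proof.
move=> _ _ t t01 [a Aa <-] [b Ab <-]; exists (t *: a + (1 - t) *: b).
  exact: admissible_mult_convex.
exact: mult_comb_conv.
Qed.

End Multipliers.

Section ErrorBoundMultipliers.
Variables (R : realType) (n m p l : nat).
Variable h : 'I_p -> 'rV[R]_n -> 'rV[R]_m -> \bar R.
Variables (x : 'rV[R]_n) (y : 'rV[R]_m) (M : R).
Hypothesis h_fin : forall i y, h i x y \is a fin_num.
Hypothesis M_gt0 : 0 < M.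
Implicit Types (i : 'I_p) (d : 'rV[R]_m) (D : R).

Local Notation mults := (admissible_mult l h x y M).
Local Notation comb := (mult_comb h x y).

Lemma active_slope_le d D i : (forall lam, mults lam -> edot d (comb lam) <= D) ->
  (i < l)%N -> hR h i x y = 0 -> M * 'd (hR h i x) y d <= D.
Proof.
move=> dD il hy0; have := dD (M *: delta_mx 0 i).
rewrite mult_comb_delta edotZr edotC edot_grad_y; apply.
apply: admissible_mult_delta; last by rewrite ger0_norm // ltW.
by rewrite /admissible_coef il hy0 eqxx /= ltW.
Qed.

Lemma equality_slope_le d D i : (forall lam, mults lam -> edot d (comb lam) <= D) ->
  (l <= i)%N -> M * `|'d (hR h i x) y d| <= D.
Proof.
move=> dD li; have adm c : `|c| <= M -> mults (c *: delta_mx 0 i).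
  by apply: admissible_mult_delta; rewrite /admissible_coef ltnNge li.
have M_le : `|M| <= M by rewrite ger0_norm // ltW.
have NM_le : `|- M| <= M by rewrite normrN.
have := dD _ (adm _ M_le); have := dD _ (adm _ NM_le).
rewrite !mult_comb_delta !edotZr !(edotC d) !edot_grad_y => le_neg le_pos.
have [c0|c0] := lerP 0 ('d (hR h i x) y d).
  by rewrite ger0_norm //; nra.
by rewrite ltr0_norm //; nra.
Qed.

Section Ray.
Variables (d : 'rV[R]_m) (s e : R).
Hypotheses (Gy : Gamma l h x y) (y_diff : forall i, differentiable (hR h i x) y).
Hypotheses (s_ge0 : 0 <= s) (e_gt0 : 0 < e).
Hypothesis active_slope :
  forall i, (i < l)%N -> hR h i x y = 0 -> 'd (hR h i x) y d <= s.
Hypothesis equality_slope : forall i, (l <= i)%N -> `|'d (hR h i x) y d| <= s.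

Lemma viol_ray_le i : \forall t \near 0^'+, viol l h i x (y + t *: d) <= t * (s + e).
Proof.
have approx := diff_ray_approx d (y_diff i) e_gt0; have /(GammaE _ h_fin)[Hle Heq] := Gy.
set c := 'd (hR h i x) y d in approx *; rewrite /viol; case: ltnP => [il|li].
  have [hy0|hy_ne0] := eqVneq (hR h i x y) 0.
    apply: filterS2 (nbhs_right_gt 0) approx => t t0.
    by rewrite hy0 subr0 ler_norml => /andP[_]; have := active_slope il hy0; nra.
  have hy_neg : 0 < - hR h i x y by rewrite oppr_gt0 lt_neqAle hy_ne0 Hle.
  apply: filterS3 (nbhs_right_gt 0) approx (near0_right_mulr_lt (c + e) hy_neg).
  move=> t t0; rewrite ler_norml => /andP[_] approx_t small_t.
  have : 0 <= t * (s + e) by rewrite mulr_ge0 ?addr_ge0 // ltW.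
  by move: small_t approx_t; rewrite mulrDr; lra.
apply: filterS2 (nbhs_right_gt 0) approx => t t0; rewrite Heq // subr0 => approx_t.
have := ler_normD (hR h i x (y + t *: d) - t * c) (t * c).
by rewrite subrK normrM gtr0_norm //; have := equality_slope li; nra.
Qed.

Lemma rresid_ray_le : \forall t \near 0^'+, rresid l h x (y + t *: d) <= t * (s + e).
Proof.
have viol_near : \forall t \near 0^'+, forall i, viol l h i x (y + t *: d) <= t * (s + e).
  by apply: filter_forall => i; exact: viol_ray_le.
apply: filterS2 (nbhs_right_gt 0) viol_near => t t0 vt.
by apply: rresid_le vt; rewrite mulr_ge0 ?addr_ge0 // ltW.
Qed.

End Ray.

Section LocalErrorBound.
Variable r : R.
Hypothesis h_A1 : forall i,
  ((i < l)%N -> econvex (h i x)) /\ ((l <= i)%N -> eaffine (h i x)).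
Hypotheses (r_gt0 : 0 < r) (y_diff : forall i, differentiable (hR h i x) y).
Hypothesis error_bound :
  forall z, `|z - y| < r -> edist z (Gamma l h x) <= M * rresid l h x z.

Lemma normal_eq_mult_proj (u c : 'rV[R]_m) : Gamma l h x y -> enorm u = 1 ->
    (forall w, Gamma l h x w -> edot u (w - y) <= 0) ->
    (forall lam, mults lam -> edot (u - c) (comb lam) <= edot (u - c) c) ->
  u = c.
Proof.
move=> Gy u1 u_normal c_normal; set d := u - c in c_normal *; set D := edot d c.
have D_ge0 : 0 <= D.
  have := c_normal 0 (admissible_mult0 l h x y (ltW M_gt0)).
  by rewrite mult_comb0 edot0r.
have s_ge0 : 0 <= D / M by rewrite divr_ge0 // ltW.
have active i : (i < l)%N -> hR h i x y = 0 -> 'd (hR h i x) y d <= D / M.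
  by move=> il hy0; rewrite ler_pdivlMr // mulrC; exact: active_slope_le.
have equality i : (l <= i)%N -> `|'d (hR h i x) y d| <= D / M.
  by move=> li; rewrite ler_pdivlMr // mulrC; exact: equality_slope_le.
apply/eqP; rewrite -subr_eq0 -/d -edot_eq0 eq_le edot_ge0 andbT.
apply/ler_addgt0Pr => e e_gt0; rewrite add0r.
have eM_gt0 : 0 < e / M by rewrite divr_gt0.
have [t [t0 t_small t_resid]] : exists t, [/\ 0 < t, t * `|d| < r &
    rresid l h x (y + t *: d) <= t * (D / M + e / M)].
  apply: (filter_ex (F := 0^'+)); apply: filterS3 (nbhs_right_gt 0)
    (near0_right_mulr_lt `|d| r_gt0) (rresid_ray_le Gy y_diff s_ge0 eM_gt0 active equality).
  by move=> t; split.
have lower : t * (edot d d + D) <= edist (y + t *: d) (Gamma l h x).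
  have := edist_ge_halfspace (y + t *: d) Gy u1 u_normal.
  by rewrite [y + _]addrC addrK edotZr -[u](subrK c) -/d edotDl (edotC c).
have upper : edist (y + t *: d) (Gamma l h x) <= t * (D + e).
  apply: le_trans (error_bound _) _.
    by rewrite [y + _]addrC addrK normrZ gtr0_norm.
  apply: le_trans (ler_wpM2l (ltW M_gt0) t_resid) _.
  have -> : M * (t * (D / M + e / M)) = t * (D + e) by field; rewrite gt_eqF.
  exact: lexx.
by have := le_trans lower upper; rewrite ler_pM2l //; lra.
Qed.

Lemma LambdaM_of_error_bound nu :
  ~ Gamma l h x nu -> eproj nu (Gamma l h x) y -> LambdaM l h M nu x y !=set0.
Proof.
move=> nu_out y_proj; have Gy := y_proj.1.
have nuy : nu - y != 0 by rewrite subr_eq0; apply: contraPneq nu_out => ->.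
pose u := (enorm (nu - y))^-1 *: (nu - y).
have u1 : enorm u = 1.
  by rewrite enormZ ger0_norm ?invr_ge0 ?enorm_ge0 // mulVf // enorm_eq0.
have u_normal w : Gamma l h x w -> edot u (w - y) <= 0.
  move=> Gw; rewrite edotZl mulr_ge0_le0 ?invr_ge0 ?enorm_ge0 //.
  exact: eproj_normal (Gamma_convex h_fin h_A1) y_proj w Gw.
have [c c_proj] : exists c, eproj u (comb @` mults) c.
  apply: eproj_exists.
    by apply: compact_closed; [exact: norm_hausdorff | exact: mult_comb_image_compact].
  by exists 0, 0; [exact: admissible_mult0 (ltW M_gt0) | exact: mult_comb0].
have u_eq_c : u = c.
  apply: normal_eq_mult_proj => // lam lam_adm; rewrite -subr_le0 -edotBr.
  apply: eproj_normal (@mult_comb_image_convex R n m p l h x y M) c_proj _ _.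
  exact: imageP.
have [lam [lam_coef lamM] lam_c] := c_proj.1.
exists lam; split => //; split.
  rewrite -[\sum_(i < p) _]/(comb lam) lam_c -u_eq_c /u enormBC -scalerDr.
  by rewrite -[y - nu]opprB addNr scaler0.
move=> i il; have := lam_coef i; rewrite /admissible_coef il.
case: eqP => [hy0|_] coef.
  by split; [exact: coef | rewrite (hRE h_fin) hy0 mule0].
by have -> : lam 0 i = 0 := coef; rewrite mul0e.
Qed.

End LocalErrorBound.

End ErrorBoundMultipliers.

Lemma not_near_seq (R : realType) (T : pseudoMetricType R) (a : T) (Q : T -> Prop) :
  ~ (\forall z \near a, Q z) -> exists u : nat -> T, u @ \oo --> a /\ forall k, ~ Q (u k).
Proof.
move=> nQ; have pick k : exists z, ball a k.+1%:R^-1 z /\ ~ Q z.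
  apply: contrapT => nz; apply: nQ; apply/nbhs_ballP; exists k.+1%:R^-1 => [|z az].
    by rewrite /= invr_gt0.
  by apply: contrapT => nQz; apply: nz; exists z.
have [u uP] := choice pick; exists u; split => [|k]; last by have [] := uP k.
apply/cvg_ballP => e e0; near=> k; apply: le_ball (uP k).1; apply: ltW.
by near: k; exact: (near_infty_natSinv_lt (PosNum e0)).
Unshelve. all: by end_near.
Qed.

Section Equivalence.
Variables (R : realType) (n m p l : nat).
Variable h : 'I_p -> 'rV[R]_n -> 'rV[R]_m -> \bar R.
Variables (xb : 'rV[R]_n) (yb : 'rV[R]_m).
Implicit Types (i : 'I_p) (x : 'rV[R]_n) (y : 'rV[R]_m).
Hypothesis h_dom : forall x, domG l h x -> forall i,
  (forall y, h i x y \is a fin_num) /\ continuous (hR h i x).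
Hypothesis h_A1 : forall x i,
  ((i < l)%N -> econvex (h i x)) /\ ((l <= i)%N -> eaffine (h i x)).

Definition bounded_mult_seq (M : R) :=
  forall (xk : nat -> 'rV[R]_n) (nuk yk : nat -> 'rV[R]_m),
    (forall k, domG l h (xk k)) ->
    xk @ \oo --> xb -> nuk @ \oo --> yb ->
    (forall k, ~ Gamma l h (xk k) (nuk k)) ->
    (forall k, eproj (nuk k) (Gamma l h (xk k)) (yk k)) ->
    \forall k \near \oo, LambdaM l h M (nuk k) (xk k) (yk k) !=set0.

Lemma dom_fin x : domG l h x -> forall i y, h i x y \is a fin_num.
Proof. by move=> dx i; have [] := h_dom dx i. Qed.

Lemma Rregular_of_bounded_mult_seq M :
  0 < M -> bounded_mult_seq M -> Rregular l h (domG l h) xb yb.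
Proof.
move=> M_gt0 mult_bound; exists M; split => //; apply: contrapT => not_reg.
pose Q z :=
  domG l h z.1 -> ((edist z.2 (Gamma l h z.1))%:E <= M%:E * resid l h z.1 z.2)%E.
have [z [z_lim z_bad]] : exists z : nat -> 'rV[R]_n * 'rV[R]_m,
    z @ \oo --> (xb, yb) /\ forall k, ~ Q (z k).
  by apply: not_near_seq => Q_near; apply: not_reg; exists [set z | Q z]; split.
pose xk k := (z k).1; pose nuk k := (z k).2.
have dom k : domG l h (xk k) by apply: contrapT => nd; apply: (z_bad k) => /nd.
have bound_fails k :
    ~ (edist (nuk k) (Gamma l h (xk k)) <= M * rresid l h (xk k) (nuk k)).
  move=> le; apply: (z_bad k) => _.
  by rewrite (residE _ (dom_fin (dom k))) -EFinM lee_fin.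
have nu_out k : ~ Gamma l h (xk k) (nuk k).
  move=> Gnu; apply: (bound_fails k); apply: le_trans (edist_le_enorm _ Gnu) _.
  have /eqP -> : enorm (nuk k - nuk k) == 0 by rewrite enorm_eq0 subrr.
  by rewrite mulr_ge0 ?rresid_ge0 // ltW.
have proj k : exists y, eproj (nuk k) (Gamma l h (xk k)) y.
  apply: eproj_exists (dom k); apply: Gamma_closed (dom_fin (dom k)) _ => i.
  by have [] := h_dom (dom k) i.
have [yk y_proj] := choice proj.
have [k [lam lamM]] := filter_ex (mult_bound xk nuk yk dom
  (cvg_comp _ _ z_lim cvg_fst) (cvg_comp _ _ z_lim cvg_snd) nu_out y_proj).
apply: (bound_fails k); rewrite (edist_eproj (y_proj k)).
exact: (enorm_le_mult_rresid (dom_fin (dom k)) (h_A1 (xk k)) (nu_out k) (y_proj k) lamM).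
Qed.

Lemma rresid_near0 e : Gamma l h xb yb ->
    (forall i, {for (xb, yb), continuous (fun w => h i w.1 w.2)}) -> 0 < e ->
  \forall z \near (xb, yb), rresid l h z.1 z.2 <= e.
Proof.
move=> Gb h_cont e_gt0; have fin := dom_fin (ex_intro _ yb Gb).
have /(GammaE _ fin)[Hle Heq] := Gb.
have viol_near i : \forall z \near (xb, yb), viol l h i z.1 z.2 < e.
  have : (fun z => hR h i z.1 z.2) @ (xb, yb) --> hR h i xb yb.
    have : (fun w => h i w.1 w.2) @ (xb, yb) --> (hR h i xb yb)%:E.
      by rewrite -(hRE fin); exact: h_cont.
    exact: fine_cvg.
  rewrite /viol; case: ltnP => [il|li] hR_cvg.
    by apply: (cvgr_lt _ hR_cvg); exact: le_lt_trans (Hle i il) e_gt0.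
  move/cvgrPdist_lt: hR_cvg => /(_ e e_gt0); apply: filterS => z.
  by rewrite Heq // sub0r normrN.
near=> z; have viol_lt : forall i, viol l h i z.1 z.2 < e.
  by near: z; exact: filter_forall.
by apply: rresid_le (ltW e_gt0) _ => i; exact: ltW.
Unshelve. all: by end_near.
Qed.

Lemma bounded_mult_seq_of_Rregular (W : set ('rV[R]_n * 'rV[R]_m)) :
    Gamma l h xb yb -> open W -> W (xb, yb) ->
    (forall i, {for (xb, yb), continuous (fun w => h i w.1 w.2)}) ->
    (forall i z, W z -> differentiable (hR h i z.1) z.2) ->
  Rregular l h (domG l h) xb yb -> exists M, 0 < M /\ bounded_mult_seq M.
Proof.
move=> Gb W_open Wb h_cont W_diff [M [M_gt0 [U [U_nbhs U_bound]]]].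
exists M; split => // xk nuk yk dom xk_lim nuk_lim nu_out y_proj.
have /nbhs_ballP[e /= e_gt0 e_sub] : nbhs (xb, yb) (U `&` W).
  by apply: filterI => //; exact: open_nbhs_nbhs.
have e4_gt0 : 0 < e / 4 by rewrite divr_gt0.
have z_lim : (fun k => (xk k, nuk k)) @ \oo --> (xb, yb).
  exact: (@cvg_pair _ _ _ _ (nbhs xb) (nbhs yb) _ _ _ xk nuk xk_lim nuk_lim).
near=> k.
have [] : ball (xb, yb) (e / 4) (xk k, nuk k).
  by near: k; apply: z_lim; exact: nbhsx_ballx.
rewrite /= -!ball_normE /ball_ /= => xk_near nuk_near.
have resid_small : rresid l h (xk k) (nuk k) <= e / 4 / M.
  by near: k; apply: z_lim (rresid_near0 Gb h_cont _); rewrite divr_gt0.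
have fin := dom_fin (dom k).
have in_UW z : `|yb - z| < e -> (U `&` W) (xk k, z).
  by move=> z_near; apply: e_sub; split; rewrite /= -ball_normE /ball_ /=; lra.
have err z : `|yb - z| < e -> edist z (Gamma l h (xk k)) <= M * rresid l h (xk k) z.
  case/in_UW => Uz _; have := U_bound _ _ Uz (dom k).
  by rewrite (residE _ fin) -EFinM lee_fin.
have yk_near : `|yb - yk k| < e / 2.
  have : `|nuk k - yk k| <= e / 4.
    rewrite distrC; apply: le_trans (mx_norm_le_enorm _) _.
    rewrite -(edist_eproj (y_proj k)); apply: le_trans (err _ _) _; first lra.
    by rewrite -ler_pdivlMl // mulrC.
  by have := ler_distD (nuk k) yb (yk k); lra.
have e2_gt0 : 0 < e / 2 by rewrite divr_gt0.
apply: (LambdaM_of_error_bound fin M_gt0 (h_A1 (xk k)) e2_gt0 _ _ (nu_out k)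
  (y_proj k)).
  by move=> i; apply: (W_diff i (xk k, yk k)); apply: (in_UW _ _).2; lra.
move=> z z_near; apply: err.
by have := ler_distD (yk k) yb z; rewrite [`|yk k - z|]distrC; lra.
Unshelve. all: by end_near.
Qed.

End Equivalence.

Theorem theorem3p2 (R : realType) (n m p l : nat)
  (h : 'I_p -> 'rV[R]_n -> 'rV[R]_m -> \bar R)
  (xb : 'rV[R]_n) (yb : 'rV[R]_m)
  (hlp : (l <= p)%N)
  (hxb : domG l h xb)
  (hyb : Gamma l h xb yb)
  (* continuity and continuous differentiability w.r.t. y near {xb} x Gamma(xb) *)
  (hW : exists W : set ('rV[R]_n * 'rV[R]_m),
      open W /\ (forall y, Gamma l h xb y -> W (xb, y)) /\
      forall i : 'I_p,
        (forall z, W z -> h i z.1 z.2 \is a fin_num) /\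
        (forall z, W z -> {for z, continuous (fun w => h i w.1 w.2)}) /\
        (forall z, W z -> differentiable (fun y => fine (h i z.1 y)) z.2) /\
        (forall z, W z -> {for z, continuous (fun w => grad_y h i w.1 w.2)}))
  (* h_i(x, .) : R^m -> R continuous for x in dom Gamma *)
  (hfin : forall x, domG l h x -> forall i : 'I_p,
      (forall y, h i x y \is a fin_num) /\ continuous (fun y => fine (h i x y)))
  (* (A1) *)
  (hA1 : forall x (i : 'I_p),
      ((i < l)%N -> econvex (h i x)) /\ ((l <= i)%N -> eaffine (h i x)))
  (* (A2) *)
  (hA2 : loc_bounded l h xb) :
  Rregular l h (domG l h) xb yb <->
  exists M : R, 0 < M /\
    forall (xk : nat -> 'rV[R]_n) (nuk yk : nat -> 'rV[R]_m),
      (forall k, domG l h (xk k)) ->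
      xk @ \oo --> xb -> nuk @ \oo --> yb ->
      (forall k, ~ Gamma l h (xk k) (nuk k)) ->
      (forall k, eproj (nuk k) (Gamma l h (xk k)) (yk k)) ->
      \forall k \near \oo, LambdaM l h M (nuk k) (xk k) (yk k) !=set0.
Proof.
have [W [W_open [W_Gamma W_reg]]] := hW.
split; last first.
  move=> [M [M_gt0 mult_bound]].
  exact: (Rregular_of_bounded_mult_seq hfin hA1 M_gt0 mult_bound).
apply: (bounded_mult_seq_of_Rregular hfin hA1 hyb W_open (W_Gamma _ hyb)) => [i|i z Wz].
  by have [_ [cont _]] := W_reg i; exact: (cont _ (W_Gamma _ hyb)).
by have [_ [_ [diff _]]] := W_reg i; exact: (diff _ Wz).
Qed.
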